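(* In the Setting, under (SA1)–(SA3), let $\mathcal I\in\wp_k[n]$, distinct $i,j\in\mathcal I$ and distinct $\alpha,\beta\in\mathcal I^{\mathtt C}$ be such that $Y(\mathcal I)^{ij}_{\alpha\beta}$ is a radical term. Then $0\notin\chi(\mathcal I\mid^{ij}_{\alpha\gamma})$ for every $\gamma\in\mathcal I^{\mathtt C}$ with $\gamma\ne\alpha$.
   Context: Setting. $d\ge1$, $1\le k\le n$; $\mathbf t=(t_1,\dots,t_d)$ indeterminates; $\Lambda:=\mathbb C[t_1^{\pm1},\dots,t_d^{\pm1}]$ (a UFD whose units are exactly the elements $c\,\mathbf t^{\mathbf e}:=c\prod_u t_u^{e_u}$, $c\in\mathbb C\setminus\{0\}$, $\mathbf e\in\mathbb Z^d$), $\mathbb F$ its fraction field, $\overline{\mathbb F}$ an algebraic closure. $[n]=\{1,\dots,n\}$, $\wp_k[n]$ the $k$-subsets of $[n]$. For $\mathcal I\in\wp_k[n]$: $\mathcal I^{\mathtt C}=[n]\setminus\mathcal I$; $\mathcal I^i_\alpha=(\mathcal I\setminus\{i\})\cup\{\alpha\}$ ($i\in\mathcal I,\alpha\notin\mathcal I$); $\mathcal I^{ij}_{\alpha\beta}=(\mathcal I\setminus\{i,j\})\cup\{\alpha,\beta\}$. $\mathbf L$ ($k\times n$) and $\mathbf R$ ($n\times k$) have entries in $\overline{\mathbb F}$; $\Delta_{\mathbf L}(\mathcal I)$, $\Delta_{\mathbf R}(\mathcal I)$ are the maximal minors on columns, resp. rows, $\mathcal I$; $h(\mathcal I):=\Delta_{\mathbf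 L}(\mathcal I)\Delta_{\mathbf R}(\mathcal I)$; $\mathfrak G:=\{\mathcal I:\Delta_{\mathbf L}(\mathcal I)\ne0\}$. (SA1) all $\Delta_{\mathbf R}(\mathcal I)\ne0$; (SA2) $h(\mathcal I)$ is a unit of $\Lambda$ for every $\mathcal I\in\mathfrak G$; (SA3) $\mathbf L$ has no zero column. $Y(\mathcal I)^{ij}_{\alpha\beta}:=-\mathrm{sign}[(i-\alpha)(i-\beta)(j-\alpha)(j-\beta)]\frac{\Delta_{\mathbf R}(\mathcal I^i_\alpha)\Delta_{\mathbf R}(\mathcal I^j_\beta)}{\Delta_{\mathbf R}(\mathcal I^i_\beta)\Delta_{\mathbf R}(\mathcal I^j_\alpha)}$. The multiset $\chi(\mathcal I\mid^{ij}_{\alpha\beta}):=\{h(\mathcal I)h(\mathcal I^{ij}_{\alpha\beta}),\,h(\mathcal I^i_\alpha)h(\mathcal I^j_\beta),\,h(\mathcal I^i_\beta)h(\mathcal I^j_\alpha)\}$. $Y(\mathcal I)^{ij}_{\alpha\beta}$ is radical if $0\notin\chi(\mathcal I\mid^{ij}_{\alpha\beta})$ and $Y(\mathcal I)^{ij}_{\alpha\beta}\notin\mathbb F$. *)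

From HB Require Import structures.
From mathcomp Require Import all_boot all_order all_algebra.
From mathcomp Require Import mpoly.
From mathcomp Require Import complex.
From mathcomp Require Import reals.
Set Implicit Arguments. Unset Strict Implicit. Unset Printing Implicit Defensive.
Import Order.TTheory GRing.Theory Num.Theory.
Local Open Scope ring_scope.

Notation Cplx R := (complex (Real.sort R)).

Section Defs.
Variables (R : realType) (d : nat) (K : fieldType).
(* phi : C[t_1..t_d] -> K, an injective ring morphism; K plays the role of F-bar *)
Variable phi : {mpoly (Cplx R)[d]} -> K.

(* x lies in (the image of) Lambda = C[t^{+-1}] : x * t^m is a polynomial for some monomial m *)
Definition inLambda (x : K) : Prop :=
  exists (m : 'X_{1..d}) (p : {mpoly (Cplx R)[d]}), x * phi 'X_[m] = phi p.

Definition isLunit (x : K) : Prop := x != 0 /\ inLambda x /\ inLambda x^-1.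

(* x lies in (the image of) F = Frac(Lambda) *)
Definition inF (x : K) : Prop :=
  exists (p q : {mpoly (Cplx R)[d]}), q != 0 /\ x = phi p / phi q.
End Defs.

Section Minors.
Variables (K : fieldType) (k n : nat).

Definition minorL (L : 'M[K]_(k, n)) (I : {set 'I_n}) : K :=
  \det (\matrix_(a < k, b < k)
          match onth (enum I) b with Some c => L a c | None => 0 end).

Definition minorR (Rm : 'M[K]_(n, k)) (I : {set 'I_n}) : K :=
  \det (\matrix_(a < k, b < k)
          match onth (enum I) a with Some c => Rm c b | None => 0 end).

Definition hh (L : 'M[K]_(k, n)) (Rm : 'M[K]_(n, k)) (I : {set 'I_n}) : K :=
  minorL L I * minorR Rm I.

Definition swap1 (I : {set 'I_n}) (i a : 'I_n) : {set 'I_n} := a |: (I :\ i).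
Definition swap2 (I : {set 'I_n}) (i j a b : 'I_n) : {set 'I_n} :=
  a |: (b |: ((I :\ i) :\ j)).

Definition Yterm (Rm : 'M[K]_(n, k)) (I : {set 'I_n}) (i j a b : 'I_n) : K :=
  - (Num.sg ((i%:Z - a%:Z) * (i%:Z - b%:Z) * (j%:Z - a%:Z) * (j%:Z - b%:Z)))%:~R
  * (minorR Rm (swap1 I i a) * minorR Rm (swap1 I j b))
  / (minorR Rm (swap1 I i b) * minorR Rm (swap1 I j a)).

Definition chi_nonzero (L : 'M[K]_(k, n)) (Rm : 'M[K]_(n, k))
    (I : {set 'I_n}) (i j a b : 'I_n) : Prop :=
  [/\ hh L Rm I * hh L Rm (swap2 I i j a b) != 0,
      hh L Rm (swap1 I i a) * hh L Rm (swap1 I j b) != 0 &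
      hh L Rm (swap1 I i b) * hh L Rm (swap1 I j a) != 0].
End Minors.

Definition radical (R : realType) (d : nat) (K : fieldType)
    (phi : {mpoly (Cplx R)[d]} -> K) (k n : nat)
    (L : 'M[K]_(k, n)) (Rm : 'M[K]_(n, k)) (I : {set 'I_n}) (i j a b : 'I_n) : Prop :=
  chi_nonzero L Rm I i j a b /\ ~ inF phi (Yterm Rm I i j a b).

From HB Require Import structures.
From mathcomp Require Import all_boot all_order all_algebra.
From mathcomp Require Import mpoly.
From mathcomp Require Import complex.
From mathcomp Require Import reals.
From mathcomp Require Import ring.
Import Order.TTheory GRing.Theory Num.Theory.
Local Open Scope ring_scope.
Set Implicit Arguments. Unset Strict Implicit. Unset Printing Implicit Defensive.

(* Write M = L_I^-1 L and N = (R R_I^-1)^T for the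
   matrices L and R^T reduced on the k-set I (their minors on I are the identity).
   The minors of L, R on I^x_y and I^{x1 x2}_{y1 y2} are those of L, R on I times
   the entry M p y, N p y, resp. the 2x2 minor of M, N on rows p1, p2 and columns
   y1, y2, up to a common nonzero integer (ExchangeMinors, via the multilinearity
   of the determinant in the replaced columns, ColumnReplacement).  So the three
   products in chi(I|^{ij}_{ay}) are nonzero iff M_ia M_jy, M_iy M_ja and the 2x2
   minor of M on (a, y) are, Y(I)^{ij}_{ab} is a nonzero element of F times the
   cross ratio of N, and (SA1)-(SA3) say: N has no zero entries and no vanishing
   2x2 minors outside I, M_py N_py and the products of 2x2 minors of M and N lie
   in F, and no column of M vanishes.  The heart of the proof (ExchangeCore) is
   then an argument about cross ratios over an arbitrary subfield F: if the
   cross ratio of N on (a, b) is not in F, a zero among M_ig, M_jg or in the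
   minor on (a, g) would force it into F, either through cocycle relations of
   cross ratios or because the cross ratio of M would be a common root of two
   quadratics over F. *)


Section CrossRatios.
Variables (K : fieldType) (rowT colT : Type).

Definition minor2 (A : rowT -> colT -> K) p1 p2 y1 y2 : K :=
  A p1 y1 * A p2 y2 - A p2 y1 * A p1 y2.

Definition cross (A : rowT -> colT -> K) p1 p2 y1 y2 : K :=
  A p1 y1 * A p2 y2 / (A p1 y2 * A p2 y1).

Definition weight (A B : rowT -> colT -> K) p1 p2 y1 y2 : K :=
  A p1 y1 * B p1 y1 * (A p2 y2 * B p2 y2).

Lemma cross_swap_rows A p1 p2 y1 y2 : cross A p2 p1 y1 y2 = (cross A p1 p2 y1 y2)^-1.
Proof. by rewrite /cross invf_div [A p2 y1 * _]mulrC [A p2 y2 * _]mulrC. Qed.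

Lemma cross_quadratic A B p1 p2 y1 y2 : A p1 y2 != 0 -> A p2 y1 != 0 ->
  weight A B p1 p2 y2 y1 * cross A p1 p2 y1 y2 ^+ 2
  - (weight A B p1 p2 y1 y2 + weight A B p1 p2 y2 y1
     - minor2 A p1 p2 y1 y2 * minor2 B p1 p2 y1 y2) * cross A p1 p2 y1 y2
  + weight A B p1 p2 y1 y2 = 0.
Proof. by move=> h12 h21; rewrite /cross /weight /minor2; field; rewrite h12 h21. Qed.

Lemma cross_from_weights A B p1 p2 y1 y2 :
  A p1 y1 != 0 -> A p2 y2 != 0 -> A p1 y2 != 0 -> A p2 y1 != 0 ->
  B p1 y2 != 0 -> B p2 y1 != 0 ->
  cross B p1 p2 y1 y2 =
    weight A B p1 p2 y1 y2 / (weight A B p1 p2 y2 y1 * cross A p1 p2 y1 y2).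
Proof.
by move=> h11 h22 h12 h21 g12 g21; rewrite /cross /weight; field; rewrite h11 h22 h12 h21 g12 g21.
Qed.

End CrossRatios.

Section ExchangeCore.
Variables (K : fieldType) (F : K -> Prop).
Hypothesis F1 : F 1.
Hypothesis FD : forall x y, F x -> F y -> F (x + y).
Hypothesis FN : forall x, F x -> F (- x).
Hypothesis FM : forall x y, F x -> F y -> F (x * y).
Hypothesis FV : forall x, F x -> F x^-1.

Lemma FB x y : F x -> F y -> F (x - y).
Proof. by move=> Fx Fy; apply: FD => //; apply: FN. Qed.

Lemma Fdiv x y : F x -> F y -> F (x / y).
Proof. by move=> Fx Fy; apply: FM => //; apply: FV. Qed.

Lemma common_root_in (b s a d t e r : K) :
  F b -> F s -> F a -> F d -> F t -> F e -> d * a != b * e ->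
  b * r ^+ 2 - s * r + a = 0 -> d * r ^+ 2 - t * r + e = 0 -> F r.
Proof.
move=> Fb Fs Fa Fd Ft Fe da_be q1 q2.
have lin : (d * s - b * t) * r = d * a - b * e.
  transitivity (d * a - b * e
    - (d * (b * r ^+ 2 - s * r + a) - b * (d * r ^+ 2 - t * r + e))); first by ring.
  by rewrite q1 q2 !mulr0 !subr0.
have coef : d * s - b * t != 0 by apply: contraNneq da_be => c0; rewrite -subr_eq0 -lin c0 mul0r.
have -> : r = (d * a - b * e) / (d * s - b * t) by rewrite -lin mulrC mulKf.
by apply: Fdiv; apply: FB; apply: FM.
Qed.

Variables (rowT colT : Type) (O : colT -> Prop) (m n : rowT -> colT -> K).
Hypothesis n_neq0 : forall p y, O y -> n p y != 0.
Hypothesis minor2_n_neq0 : forall p1 p2 y1 y2, p1 <> p2 -> O y1 -> O y2 -> y1 <> y2 ->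
  minor2 n p1 p2 y1 y2 != 0.
Hypothesis F_mn : forall p y, O y -> F (m p y * n p y).
Hypothesis F_minor2 : forall p1 p2 y1 y2, p1 <> p2 -> O y1 -> O y2 -> y1 <> y2 ->
  F (minor2 m p1 p2 y1 y2 * minor2 n p1 p2 y1 y2).
Hypothesis m_col_neq0 : forall y, O y -> exists p, m p y != 0.

Lemma cross_zero_entry p1 p2 y1 y2 : p1 <> p2 -> y1 <> y2 -> O y1 -> O y2 ->
  m p1 y2 = 0 -> m p1 y1 != 0 -> m p2 y2 != 0 -> F (cross n p1 p2 y1 y2).
Proof.
move=> p12 y12 Oy1 Oy2 m12 m11 m22.
have n11 := n_neq0 p1 Oy1; have n22 := n_neq0 p2 Oy2.
have n12 := n_neq0 p1 Oy2; have n21 := n_neq0 p2 Oy1.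
have Fminor := F_minor2 p12 Oy1 Oy2 y12.
rewrite -[cross _ _ _ _ _]invrK; apply: FV.
have -> : (cross n p1 p2 y1 y2)^-1 = 1 - minor2 m p1 p2 y1 y2 * minor2 n p1 p2 y1 y2 /
    (m p1 y1 * n p1 y1 * (m p2 y2 * n p2 y2)).
  by rewrite /cross /minor2 m12; field; rewrite m11 m22 n11 n22 n12 n21.
by apply: FB => //; apply: Fdiv => //; apply: FM; apply: F_mn.
Qed.

Lemma cross_cols p1 p2 y1 y2 y3 : O y1 -> O y2 -> O y3 ->
  cross n p1 p2 y1 y2 = cross n p1 p2 y1 y3 / cross n p1 p2 y2 y3.
Proof. by move=> O1 O2 O3; rewrite /cross; field; rewrite !n_neq0. Qed.

Lemma cross_rows p1 p2 p3 y1 y2 : O y1 -> O y2 ->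
  cross n p1 p2 y1 y2 = cross n p1 p3 y1 y2 / cross n p2 p3 y1 y2.
Proof. by move=> O1 O2; rewrite /cross; field; rewrite !n_neq0. Qed.

Section ExchangeColumn.
Variables (pi pj : rowT) (a b g : colT).
Hypotheses (pij : pi <> pj) (Oa : O a) (Ob : O b) (Og : O g).
Hypotheses (ab : a <> b) (ga : g <> a) (gb : g <> b).
Hypotheses (mia : m pi a != 0) (mib : m pi b != 0) (mja : m pj a != 0) (mjb : m pj b != 0).
Hypothesis notF : ~ F (cross n pi pj a b).

(* Row pi of m cannot vanish in column g: otherwise the cross ratio of n on
   (a, b) is a product of cross ratios pinned in F by cross_zero_entry. *)
Lemma exchange_entry_neq0 : m pi g != 0.
Proof.
apply/eqP => mig; apply: notF; rewrite (cross_cols _ _ Oa Ob Og).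
have [mjg|mjg] := eqVneq (m pj g) 0; last first.
  by apply: Fdiv; apply: cross_zero_entry => //; apply/nesym.
have [s msg] := m_col_neq0 Og.
have [si sj] : s <> pi /\ s <> pj by split=> e; move: msg; rewrite e ?mig ?mjg eqxx.
rewrite (cross_rows pi pj s Oa Og) (cross_rows pi pj s Ob Og).
by apply: Fdiv; apply: Fdiv; apply: cross_zero_entry => //; apply/nesym.
Qed.

(* Given that row pj of m does not vanish in column g either, the 2x2 minor of
   m on columns a and g does not vanish: otherwise the cross ratios of m on
   (a, b) and (g, b) coincide, making it a common root of two quadratics over F. *)
Hypothesis mjg : m pj g != 0.

Lemma exchange_minor2_neq0 : minor2 m pi pj a g != 0.
Proof.
apply/eqP => Dag; apply: notF.
have prop : m pi g = m pi a * m pj g / m pj a.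
  by apply: (mulIf mja); rewrite divfK // mulrC; apply/eqP; rewrite eq_sym -subr_eq0; exact/eqP.
have same_cross : cross m pi pj g b = cross m pi pj a b.
  by rewrite /cross prop; field; rewrite mja mjg mib.
pose W y1 y2 := weight m n pi pj y1 y2.
pose Q y1 y2 := minor2 m pi pj y1 y2 * minor2 n pi pj y1 y2.
have FW y1 y2 : O y1 -> O y2 -> F (W y1 y2) by move=> O1 O2; apply: FM; apply: F_mn.
have FQ y1 y2 : O y1 -> O y2 -> y1 <> y2 -> F (Q y1 y2) by move=> *; apply: F_minor2.
have q_ab := cross_quadratic n mib mja.
have q_gb := cross_quadratic n mib mjg; rewrite same_cross in q_gb.
have Fcross : F (cross m pi pj a b).
  apply: (common_root_in _ _ _ _ _ _ _ q_ab q_gb);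
    do ?[apply: FB | apply: FD | apply: FW | apply: FQ]; rewrite //; try exact/nesym.
  have -> : W b g * W a b = W b a * W g b +
      m pi b * n pi b * (m pj b * n pj b) * (m pi a * m pj g) * minor2 n pi pj a g.
    by rewrite /W /weight /minor2 prop; field; rewrite mja.
  rewrite -subr_eq0 addrC addKr !mulf_neq0 ?n_neq0 //.
  by apply: minor2_n_neq0 => //; apply/nesym.
rewrite (cross_from_weights (A := m)) ?n_neq0 //.
apply: Fdiv; first by apply: FM; apply: F_mn.
by apply: FM => //; apply: FM; apply: F_mn.
Qed.

End ExchangeColumn.

Lemma exchange pi pj a b g : pi <> pj -> O a -> O b -> O g ->
  a <> b -> g <> a -> g <> b ->
  m pi a != 0 -> m pi b != 0 -> m pj a != 0 -> m pj b != 0 ->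
  ~ F (cross n pi pj a b) ->
  [/\ m pi g != 0, m pj g != 0 & minor2 m pi pj a g != 0].
Proof.
move=> pij Oa Ob Og ab ga gb mia mib mja mjb notF.
have mig : m pi g != 0 by apply: (exchange_entry_neq0 (pj := pj) (a := a) (b := b)).
have notF' : ~ F (cross n pj pi a b) by rewrite cross_swap_rows => /FV; rewrite invrK.
have mjg : m pj g != 0 by apply: (exchange_entry_neq0 (pj := pi) (a := a) (b := b)) => //; apply/nesym.
by split=> //; apply: (exchange_minor2_neq0 (b := b)).
Qed.

End ExchangeCore.

Section ColumnReplacement.
Variables (K : fieldType) (k : nat).

Definition setcol (Z : 'M[K]_k) (b : 'I_k) (v : 'I_k -> K) : 'M[K]_k :=
  \matrix_(r, c) if c == b then v r else Z r c.

Definition unitv (a : 'I_k) : 'I_k -> K := fun r => (r == a)%:R.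

Definition unit_col (Z : 'M[K]_k) (c a : 'I_k) : Prop := forall r, Z r c = unitv a r.

Lemma det_dupcol (Q : 'M[K]_k) c1 c2 :
  c1 != c2 -> (forall r, Q r c1 = Q r c2) -> \det Q = 0.
Proof. by move=> c12 eqc; rewrite -det_tr (determinant_alternate c12) // => r; rewrite !mxE. Qed.

Lemma setcolC Z b1 b2 v w : b1 != b2 ->
  setcol (setcol Z b1 v) b2 w = setcol (setcol Z b2 w) b1 v.
Proof.
move=> b12; apply/matrixP => r c; rewrite !mxE.
by case: (c =P b2) => [->|//]; rewrite eq_sym (negPf b12).
Qed.

Lemma det_setcol_expand Z b v :
  \det (setcol Z b v) = \sum_a v a * \det (setcol Z b (unitv a)).
Proof.
rewrite (expand_det_col _ b); apply: eq_bigr => a _; rewrite mxE eqxx.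
congr (_ * _); rewrite (expand_det_col _ b) (bigD1 a) //= big1 => [|r ra]; last first.
  by rewrite mxE eqxx /unitv (negPf ra) mul0r.
rewrite mxE eqxx /unitv eqxx mul1r addr0; congr (_ * \det _).
by apply/matrixP => r c; rewrite !mxE eq_sym (negPf (neq_lift _ _)).
Qed.

Lemma det_setcol_cover Z b (S : {set 'I_k}) v :
  (forall a, a \notin S -> exists2 c, c != b & unit_col Z c a) ->
  \det (setcol Z b v) = \sum_(a in S) v a * \det (setcol Z b (unitv a)).
Proof.
move=> cover; rewrite det_setcol_expand (bigID (mem S)) /= [X in _ + X]big1 ?addr0 //.
move=> a aS; have [c cb Zc] := cover a aS.
by rewrite (@det_dupcol _ c b) ?mulr0 // => r; rewrite !mxE (negPf cb) eqxx Zc.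
Qed.

Lemma det_setcol2 Z b1 b2 p1 p2 v w : b1 != b2 -> p1 != p2 ->
  (forall a, a != p1 -> a != p2 -> exists2 c, (c != b1) && (c != b2) & unit_col Z c a) ->
  \det (setcol (setcol Z b1 v) b2 w) =
  (v p1 * w p2 - v p2 * w p1) * \det (setcol (setcol Z b1 (unitv p1)) b2 (unitv p2)).
Proof.
move=> b12 p12 cover.
pose f v w := \det (setcol (setcol Z b1 v) b2 w).
have expand_w v' w' : f v' w' = w' p1 * f v' (unitv p1) + w' p2 * f v' (unitv p2).
  rewrite /f (det_setcol_cover (S := [set p1; p2])) ?big_setU1 ?big_set1 ?inE //=.
  move=> a; rewrite !inE negb_or => /andP[ap1 ap2].
  have [c /andP[cb1 cb2] Zc] := cover a ap1 ap2.
  by exists c => // r; rewrite mxE (negPf cb1).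
have expand_v v' q q' : [set q; q'] = [set p1; p2] ->
    f v' (unitv q) = v' q' * f (unitv q') (unitv q).
  move=> qq'; rewrite /f !(setcolC _ _ _ b12).
  rewrite (det_setcol_cover (S := [set q'])) ?big_set1 // => a; rewrite !inE => aq'.
  have [/eqP->|aq] := boolP (a == q).
    by exists b2; rewrite 1?eq_sym // => r; rewrite mxE eqxx.
  have : a \notin [set p1; p2] by rewrite -qq' !inE negb_or aq.
  rewrite !inE negb_or => /andP[ap1 ap2].
  have [c /andP[cb1 cb2] Zc] := cover a ap1 ap2.
  by exists c => // r; rewrite mxE (negPf cb2).
have p21 : p2 != p1 by rewrite eq_sym.
have E v' w' : f v' w' = w' p1 * v' p2 * f (unitv p2) (unitv p1)
                         + w' p2 * v' p1 * f (unitv p1) (unitv p2).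
  have s21 : [set p2; p1] = [set p1; p2] by rewrite setUC.
  by rewrite expand_w (expand_v _ p1 p2) // (expand_v _ p2 p1) // !mulrA.
pose u r := unitv p1 r + unitv p2 r.
have u1 : u p1 = 1 by rewrite /u /unitv eqxx (negPf p12) addr0.
have u2 : u p2 = 1 by rewrite /u /unitv eqxx (negPf p21) add0r.
have anti : f (unitv p2) (unitv p1) = - f (unitv p1) (unitv p2).
  have f_uu : f u u = 0.
    by apply: (det_dupcol b12) => r; rewrite !mxE !eqxx (negPf b12).
  by apply/eqP; rewrite -addr_eq0 -f_uu [f u u]E u1 u2 !mul1r.
by rewrite [LHS]E anti /f; ring.
Qed.

Lemma det_bool (Q : 'M[K]_k) : (forall r c, Q r c = 0 \/ Q r c = 1) ->
  exists z : int, \det Q = z%:~R.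
Proof.
move=> h; exists (\det (\matrix_(r, c) ((Q r c == 1) : nat)%:Z)).
rewrite -det_map_mx; congr (\det _); apply/matrixP => r c; rewrite !mxE.
by case: (h r c) => ->; rewrite ?eqxx // eq_sym oner_eq0.
Qed.

End ColumnReplacement.

Arguments unitv {K k} a r.

Section MaximalMinors.
Variables (K : fieldType) (k n : nat).

Definition subcols (A : 'M[K]_(k, n)) (J : {set 'I_n}) : 'M[K]_k :=
  \matrix_(a < k, b < k) match onth (enum J) b with Some c => A a c | None => 0 end.

Lemma minorLE A J : minorL A J = \det (subcols A J). Proof. by []. Qed.

Lemma minorR_tr (Rm : 'M[K]_(n, k)) J : minorR Rm J = minorL Rm^T J.
Proof.
rewrite /minorR -det_tr; congr (\det _); apply/matrixP => a b.
by rewrite !mxE; case: onth => // c; rewrite mxE.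
Qed.

Lemma subcols_mul (B : 'M[K]_k) A J : subcols (B *m A) J = B *m subcols A J.
Proof.
apply/matrixP => a b; rewrite !mxE; case e: (onth (enum J) b) => [c|].
  by rewrite mxE; apply: eq_bigr => r _; rewrite !mxE e.
by rewrite big1 // => r _; rewrite mxE e mulr0.
Qed.

Lemma onth_some (J : {set 'I_n}) (b : 'I_k) : #|J| = k -> exists c, onth (enum J) b = Some c.
Proof.
move=> hJ; case e: (onth (enum J) b) => [c|]; first by exists c.
by have := onthTE (enum J) b; rewrite e /= -cardE hJ ltn_ord.
Qed.

Lemma onth_in (J : {set 'I_n}) (b : nat) c : onth (enum J) b = Some c -> c \in J.
Proof. by move=> e; rewrite -mem_enum; apply/onthP; exists b. Qed.

Lemma onth_pos (J : {set 'I_n}) c : #|J| = k -> c \in J ->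
  exists b : 'I_k, onth (enum J) b = Some c.
Proof.
move=> hJ; rewrite -mem_enum => /onthP [b e].
have bk : (b < k)%N by rewrite -hJ cardE -onthTE e.
by exists (Ordinal bk).
Qed.

Lemma index_onth (J : {set 'I_n}) (b : nat) c : onth (enum J) b = Some c -> index c (enum J) = b.
Proof.
move=> e; rewrite -{1}(onth_nth c c _ _ e) index_uniq ?enum_uniq //.
by rewrite -onthTE e.
Qed.

Lemma onth_enum_inj (J : {set 'I_n}) (b1 b2 : 'I_k) c :
  onth (enum J) b1 = Some c -> onth (enum J) b2 = Some c -> b1 = b2.
Proof. by move=> e1 e2; apply: val_inj; rewrite /= -(index_onth e1) -(index_onth e2). Qed.

Lemma onth_enum_neq (J : {set 'I_n}) (b1 b2 : 'I_k) c1 c2 :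
  onth (enum J) b1 = Some c1 -> onth (enum J) b2 = Some c2 -> (c1 != c2) = (b1 != b2).
Proof.
move=> e1 e2; apply/idP/idP; apply: contraNneq => e.
  by move: e1; rewrite e e2 => -[->].
by apply/eqP; apply: (onth_enum_inj e1); rewrite e2 e.
Qed.

End MaximalMinors.

Section ExchangeMinors.
Variables (K : fieldType) (k n : nat) (I : {set 'I_n}).
Hypothesis hI : #|I| = k.

(* The matrix whose column c is the basis vector indexed by the position of
   c in I (columns outside I are zero); A is reduced on I when it agrees with
   it on the columns of I, i.e. when its minor on I is the identity. *)
Definition stdI : 'M[K]_(k, n) := \matrix_(r, c) ((r : nat) == index c (enum I))%:R.

Definition reduced (A : 'M[K]_(k, n)) : Prop := forall r c, c \in I -> A r c = stdI r c.

Definition bool_mx (Q : 'M[K]_k) : Prop := forall r c, Q r c = 0 \/ Q r c = 1.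

Lemma bool_subcols_stdI (J : {set 'I_n}) : bool_mx (subcols stdI J).
Proof. by move=> r c; rewrite !mxE; case: onth => [cc|]; [rewrite mxE; case: eqP; [right|left] | left]. Qed.

Lemma bool_setcol Q b a : bool_mx Q -> bool_mx (setcol Q b (unitv a)).
Proof. by move=> hQ r c; rewrite mxE /unitv; case: eqP => // _; case: eqP; [right|left]. Qed.

Lemma subcols_reduced A (J : {set 'I_n}) (b : 'I_k) : reduced A ->
  (forall c, onth (enum J) b = Some c -> c \in I) ->
  forall r, subcols A J r b = subcols stdI J r b.
Proof. by move=> rA inI r; rewrite !mxE; case e: onth => [c|] //; apply: rA; apply: inI. Qed.

Lemma subcols_unit_col (J : {set 'I_n}) (b a : 'I_k) c :
  onth (enum J) b = Some c -> onth (enum I) a = Some c -> unit_col (subcols stdI J) b a.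
Proof. by move=> eJ eI r; rewrite !mxE eJ mxE (index_onth eI). Qed.

Lemma card_swap1 x y (p : 'I_k) : onth (enum I) p = Some x -> y \notin I ->
  #|swap1 I x y| = k.
Proof.
move=> /onth_in xI yI; have := hI; rewrite (cardsD1 x I) xI => <-.
by rewrite /swap1 cardsU1 in_setD1 (negPf yI) andbF.
Qed.

Lemma card_swap2 x1 x2 y1 y2 (p1 p2 : 'I_k) :
  onth (enum I) p1 = Some x1 -> onth (enum I) p2 = Some x2 -> p1 != p2 ->
  y1 \notin I -> y2 \notin I -> y1 != y2 -> #|swap2 I x1 x2 y1 y2| = k.
Proof.
move=> ex1 ex2 p12 y1I y2I y12; have x12 : x1 != x2 by rewrite (onth_enum_neq ex1 ex2).
have x1I := onth_in ex1; have x2I := onth_in ex2.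
have := hI; rewrite (cardsD1 x1 I) x1I (cardsD1 x2 (I :\ x1)) in_setD1 eq_sym x12 x2I => <-.
by rewrite /swap2 cardsU1 cardsU1 !in_setU1 !in_setD1 (negPf y1I) (negPf y2I) (negPf y12) !andbF.
Qed.

Lemma minor_swap1 x y (p : 'I_k) : onth (enum I) p = Some x -> y \notin I ->
  exists e : int, forall A, reduced A -> minorL A (swap1 I x y) = A p y * e%:~R.
Proof.
move=> ex yI; set J := swap1 I x y; have hJ : #|J| = k := card_swap1 ex yI.
have [by0 ey] := onth_pos hJ (setU11 y _ : y \in J).
pose Z := subcols stdI J.
have shape A : reduced A -> subcols A J = setcol Z by0 (fun r => A r y).
  move=> rA; apply/matrixP => r c; rewrite [RHS]mxE.
  case: eqP => [->|cb]; first by rewrite mxE ey.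
  apply: subcols_reduced => // cc ec; move: (onth_in ec).
  rewrite /J /swap1 in_setU1 in_setD1 => /orP[/eqP e|/andP[_ //]].
  by case: cb; apply: (onth_enum_inj ec); rewrite ey e.
have cover a : a \notin [set p] -> exists2 c, c != by0 & unit_col Z c a.
  rewrite inE => ap; have [ca eca] := onth_some a hI; have caI := onth_in eca.
  have caJ : ca \in J by rewrite /J /swap1 in_setU1 in_setD1 (onth_enum_neq eca ex) ap caI orbT.
  have [bc ebc] := onth_pos hJ caJ.
  exists bc; last exact: subcols_unit_col ebc eca.
  by rewrite -(onth_enum_neq ebc ey); apply: contraNneq yI => <-.
have [e he] := det_bool (bool_setcol by0 p (@bool_subcols_stdI J)).
by exists e => A rA; rewrite minorLE shape // (det_setcol_cover _ cover) big_set1 he.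
Qed.

Lemma minor_swap2 x1 x2 y1 y2 (p1 p2 : 'I_k) :
  onth (enum I) p1 = Some x1 -> onth (enum I) p2 = Some x2 -> p1 != p2 ->
  y1 \notin I -> y2 \notin I -> y1 != y2 ->
  exists e : int, forall A, reduced A ->
    minorL A (swap2 I x1 x2 y1 y2) = minor2 A p1 p2 y1 y2 * e%:~R.
Proof.
move=> ex1 ex2 p12 y1I y2I y12.
set J := swap2 I x1 x2 y1 y2; have hJ : #|J| = k := card_swap2 ex1 ex2 p12 y1I y2I y12.
have inJ c : (c \in J) = [|| c == y1, c == y2 | [&& c != x2, c != x1 & c \in I]].
  by rewrite /J /swap2 !in_setU1 !in_setD1.
have [b1 eb1] : exists b1 : 'I_k, onth (enum J) b1 = Some y1 by apply: onth_pos; rewrite ?inJ ?eqxx.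
have [b2 eb2] : exists b2 : 'I_k, onth (enum J) b2 = Some y2.
  by apply: onth_pos; rewrite ?inJ ?eqxx ?orbT.
have b12 : b1 != b2 by rewrite -(onth_enum_neq eb1 eb2).
pose Z := subcols stdI J.
have shape A : reduced A ->
    subcols A J = setcol (setcol Z b1 (fun r => A r y1)) b2 (fun r => A r y2).
  move=> rA; apply/matrixP => r c; rewrite [RHS]mxE [X in if _ then _ else X]mxE.
  case: eqP => [->|cb2]; first by rewrite mxE eb2.
  case: eqP => [->|cb1]; first by rewrite mxE eb1.
  apply: subcols_reduced => // cc ec; move: (onth_in ec).
  rewrite inJ => /or3P[/eqP e|/eqP e|/and3P[_ _ //]].
    by case: cb1; apply: (onth_enum_inj ec); rewrite eb1 e.
  by case: cb2; apply: (onth_enum_inj ec); rewrite eb2 e.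
have cover a : a != p1 -> a != p2 -> exists2 c, (c != b1) && (c != b2) & unit_col Z c a.
  move=> ap1 ap2; have [ca eca] := onth_some a hI; have caI := onth_in eca.
  have [bc ebc] : exists bc : 'I_k, onth (enum J) bc = Some ca.
    by apply: onth_pos => //; rewrite inJ (onth_enum_neq eca ex1) (onth_enum_neq eca ex2) ap1 ap2 caI !orbT.
  exists bc; last exact: subcols_unit_col ebc eca.
  by rewrite -(onth_enum_neq ebc eb1) -(onth_enum_neq ebc eb2);
    apply/andP; split; [apply: contraNneq y1I | apply: contraNneq y2I] => <-.
have [e he] := det_bool (bool_setcol b2 p2 (bool_setcol b1 p1 (@bool_subcols_stdI J))).
by exists e => A rA; rewrite minorLE shape // (det_setcol2 _ _ b12 p12 cover) he.
Qed.

End ExchangeMinors.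

Section FieldOfFractions.
Variables (R : realType) (d : nat) (K : fieldType).
Variable phi : {rmorphism {mpoly (Cplx R)[d]} -> K}.
Hypothesis phi_inj : injective phi.

Lemma phi_neq0 q : q != 0 -> phi q != 0.
Proof. by apply: contra => /eqP h; apply/eqP; apply: phi_inj; rewrite h rmorph0. Qed.

Lemma inF1 : inF phi 1.
Proof. by exists 1, 1; rewrite oner_neq0 rmorph1 divr1. Qed.

Lemma inF_int (z : int) : inF phi z%:~R.
Proof. by exists z%:~R, 1; rewrite oner_neq0 rmorph1 divr1 rmorph_int. Qed.

Lemma inF_add x y : inF phi x -> inF phi y -> inF phi (x + y).
Proof.
move=> [p1 [q1 [h1 ->]]] [p2 [q2 [h2 ->]]].
exists (p1 * q2 + p2 * q1), (q1 * q2); split; first exact: mulf_neq0.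
by rewrite rmorphD !rmorphM; field; rewrite !phi_neq0.
Qed.

Lemma inF_opp x : inF phi x -> inF phi (- x).
Proof. by move=> [p [q [hq ->]]]; exists (- p), q; rewrite rmorphN mulNr. Qed.

Lemma inF_mul x y : inF phi x -> inF phi y -> inF phi (x * y).
Proof.
move=> [p1 [q1 [h1 ->]]] [p2 [q2 [h2 ->]]].
exists (p1 * p2), (q1 * q2); split; first exact: mulf_neq0.
by rewrite !rmorphM; field; rewrite !phi_neq0.
Qed.

Lemma inF_inv x : inF phi x -> inF phi x^-1.
Proof.
move=> [p [q [hq ->]]]; have [->|hp] := eqVneq p 0.
  by exists 0, 1; rewrite oner_neq0 rmorph0 !mul0r invr0.
by exists q, p; rewrite invfM invrK mulrC.
Qed.

Lemma inF_Lunit x : isLunit phi x -> inF phi x.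
Proof.
move=> [_ [[m [p e]] _]].
have Xm : 'X_[m] != 0 :> {mpoly (Cplx R)[d]}.
  by apply/eqP => h; have := mcoeffX (Cplx R) m m; rewrite h mcoeff0 eqxx => /eqP; rewrite eq_sym oner_eq0.
by exists p, 'X_[m]; rewrite -e mulfK ?phi_neq0.
Qed.

End FieldOfFractions.

Section Reduction.
Variables (K : fieldType) (k n : nat) (I : {set 'I_n}).

Definition reduce (A : 'M[K]_(k, n)) : 'M[K]_(k, n) := invmx (subcols A I) *m A.

Lemma minor_reduce A J : minorL A I != 0 -> minorL A J = minorL A I * minorL (reduce A) J.
Proof.
by move=> AI; rewrite !minorLE subcols_mul det_mulmx det_inv mulrA divff ?mul1r.
Qed.

Lemma reduced_reduce A : #|I| = k -> minorL A I != 0 -> reduced I (reduce A).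
Proof.
move=> hI AI r c cI; have [b eb] := onth_pos hI cI.
have unitA : subcols A I \in unitmx by rewrite unitmxE unitfE.
have : subcols (reduce A) I r b = reduce A r c by rewrite mxE eb.
rewrite subcols_mul mulVmx // mxE => <-.
by rewrite mxE (index_onth eb).
Qed.

End Reduction.

Section Setting.
Variables (R : realType) (d : nat) (K : fieldType).
Variable phi : {rmorphism {mpoly (Cplx R)[d]} -> K}.
Variables (k n : nat) (L : 'M[K]_(k, n)) (Rm : 'M[K]_(n, k)) (I : {set 'I_n}).
Hypothesis phi_inj : injective phi.
Hypothesis SA1 : forall J : {set 'I_n}, #|J| = k -> minorR Rm J != 0.
Hypothesis SA2 : forall J : {set 'I_n}, #|J| = k -> minorL L J != 0 -> isLunit phi (hh L Rm J).
Hypothesis SA3 : forall c : 'I_n, exists r : 'I_k, L r c != 0.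
Hypothesis hI : #|I| = k.
Hypothesis LI : minorL L I != 0.

Let F := inF phi.

Lemma RtI_neq0 : minorL Rm^T I != 0.
Proof. by rewrite -minorR_tr SA1. Qed.

Let M := reduce I L.
Let N := reduce I Rm^T.

Lemma F_hhI : F (hh L Rm I).
Proof. exact: inF_Lunit (SA2 hI LI). Qed.

Lemma hh_reduce (J : {set 'I_n}) : hh L Rm J = hh L Rm I * (minorL M J * minorL N J).
Proof.
by rewrite /hh !minorR_tr (minor_reduce J LI) (minor_reduce J RtI_neq0) -minorR_tr; ring.
Qed.

Lemma hh_neq0 (J : {set 'I_n}) : #|J| = k -> (hh L Rm J != 0) = (minorL M J != 0).
Proof.
move=> hJ; have := SA1 hJ; rewrite /hh minorR_tr (minor_reduce J LI).
by rewrite !mulf_eq0 !negb_or LI => ->; rewrite andbT.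
Qed.

Lemma F_minorMN (J : {set 'I_n}) : #|J| = k -> F (minorL M J * minorL N J).
Proof.
move=> hJ; have [MJ|MJ] := eqVneq (minorL M J) 0.
  by rewrite MJ mul0r; apply: (inF_int phi 0).
have hhJ : minorL L J != 0 by rewrite (minor_reduce J LI) mulf_neq0.
have hhI : hh L Rm I != 0 by rewrite mulf_neq0 ?SA1.
rewrite -[_ * _](mulKf hhI) -hh_reduce.
by apply: (inF_mul phi_inj); [apply: inF_inv; apply: F_hhI | apply: inF_Lunit (SA2 hJ hhJ)].
Qed.

Lemma minorN_neq0 (J : {set 'I_n}) : #|J| = k -> minorL N J != 0.
Proof.
by move=> hJ; have := SA1 hJ; rewrite minorR_tr (minor_reduce J RtI_neq0) mulf_eq0 negb_or => /andP[].
Qed.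

Lemma swap1_minors x y (p : 'I_k) : onth (enum I) p = Some x -> y \notin I ->
  exists e : int, [/\ e%:~R != 0 :> K, minorL M (swap1 I x y) = M p y * e%:~R
                    & minorL N (swap1 I x y) = N p y * e%:~R].
Proof.
move=> ex yI; have [e he] := minor_swap1 K hI ex yI.
have [eM eN] := (he _ (reduced_reduce hI LI), he _ (reduced_reduce hI RtI_neq0)).
exists e; split=> //; apply: contraTneq (minorN_neq0 (card_swap1 hI ex yI)) => e0.
by rewrite eN e0 mulr0 eqxx.
Qed.

Lemma swap2_minors x1 x2 y1 y2 (p1 p2 : 'I_k) :
  onth (enum I) p1 = Some x1 -> onth (enum I) p2 = Some x2 -> p1 != p2 ->
  y1 \notin I -> y2 \notin I -> y1 != y2 ->
  exists e : int, [/\ e%:~R != 0 :> K,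
    minorL M (swap2 I x1 x2 y1 y2) = minor2 M p1 p2 y1 y2 * e%:~R
    & minorL N (swap2 I x1 x2 y1 y2) = minor2 N p1 p2 y1 y2 * e%:~R].
Proof.
move=> ex1 ex2 p12 y1I y2I y12; have [e he] := minor_swap2 K hI ex1 ex2 p12 y1I y2I y12.
have [eM eN] := (he _ (reduced_reduce hI LI), he _ (reduced_reduce hI RtI_neq0)).
exists e; split=> //; apply: contraTneq (minorN_neq0 (card_swap2 hI ex1 ex2 p12 y1I y2I y12)) => e0.
by rewrite eN e0 mulr0 eqxx.
Qed.

Lemma N_neq0 (p : 'I_k) y : y \notin I -> N p y != 0.
Proof.
move=> yI; have [x ex] := onth_some p hI; have [e [_ _ eN]] := swap1_minors ex yI.
by have := minorN_neq0 (card_swap1 hI ex yI); rewrite eN mulf_eq0 negb_or => /andP[].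
Qed.

Lemma minor2_N_neq0 (p1 p2 : 'I_k) y1 y2 : p1 <> p2 -> y1 \notin I -> y2 \notin I -> y1 <> y2 ->
  minor2 N p1 p2 y1 y2 != 0.
Proof.
move=> /eqP p12 y1I y2I /eqP y12.
have [x1 ex1] := onth_some p1 hI; have [x2 ex2] := onth_some p2 hI.
have [e [_ _ eN]] := swap2_minors ex1 ex2 p12 y1I y2I y12.
have := minorN_neq0 (card_swap2 hI ex1 ex2 p12 y1I y2I y12).
by rewrite eN mulf_eq0 negb_or => /andP[].
Qed.

Lemma F_div_int_sqr x (e : int) : e%:~R != 0 :> K -> F (x * (e%:~R * e%:~R)) -> F x.
Proof.
move=> e0 Fx; rewrite -[x](mulfK (mulf_neq0 e0 e0)).
by apply: (inF_mul phi_inj) => //; apply: inF_inv; apply: (inF_mul phi_inj); apply: inF_int.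
Qed.

Lemma F_MN (p : 'I_k) y : y \notin I -> F (M p y * N p y).
Proof.
move=> yI; have [x ex] := onth_some p hI; have [e [e0 eM eN]] := swap1_minors ex yI.
apply: (F_div_int_sqr e0); have := F_minorMN (card_swap1 hI ex yI).
by rewrite eM eN; congr F; ring.
Qed.

Lemma F_minor2_MN (p1 p2 : 'I_k) y1 y2 : p1 <> p2 -> y1 \notin I -> y2 \notin I -> y1 <> y2 ->
  F (minor2 M p1 p2 y1 y2 * minor2 N p1 p2 y1 y2).
Proof.
move=> /eqP p12 y1I y2I /eqP y12.
have [x1 ex1] := onth_some p1 hI; have [x2 ex2] := onth_some p2 hI.
have [e [e0 eM eN]] := swap2_minors ex1 ex2 p12 y1I y2I y12.
apply: (F_div_int_sqr e0).
have := F_minorMN (card_swap2 hI ex1 ex2 p12 y1I y2I y12).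
by rewrite eM eN; congr F; ring.
Qed.

(* (SA3): every column of M is nonzero, since L = L_I M. *)
Lemma M_col_neq0 y : exists p : 'I_k, M p y != 0.
Proof.
have [r Lry] := SA3 y; apply/existsP; apply: contraNT Lry => /existsPn M0.
have unitLI : subcols L I \in unitmx by rewrite unitmxE unitfE.
rewrite -[L](mulKVmx unitLI) -/M mxE big1 // => p _.
by rewrite (eqP (negPn (M0 p))) mulr0.
Qed.

Lemma exchange_MN (pi pj : 'I_k) a b g : pi != pj ->
  a \notin I -> b \notin I -> g \notin I -> a != b -> g != a -> g != b ->
  M pi a != 0 -> M pi b != 0 -> M pj a != 0 -> M pj b != 0 ->
  ~ F (cross N pi pj a b) ->
  [/\ M pi g != 0, M pj g != 0 & minor2 M pi pj a g != 0].
Proof.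
move=> /eqP pij aI bI gI /eqP ab /eqP ga /eqP gb.
apply: (exchange (inF1 phi) (inF_add phi_inj) (@inF_opp _ _ _ phi) (inF_mul phi_inj)
  (@inF_inv _ _ _ phi) (O := fun y => y \notin I)) => //.
- exact: N_neq0.
- exact: minor2_N_neq0.
- exact: F_MN.
- exact: F_minor2_MN.
- by move=> y _; apply: M_col_neq0.
Qed.

Lemma hh_swap1_neq0 x y (p : 'I_k) : onth (enum I) p = Some x -> y \notin I ->
  (hh L Rm (swap1 I x y) != 0) = (M p y != 0).
Proof.
move=> ex yI; have [e [e0 eM _]] := swap1_minors ex yI.
by rewrite (hh_neq0 (card_swap1 hI ex yI)) eM mulf_eq0 negb_or e0 andbT.
Qed.

Lemma hh_swap2_neq0 x1 x2 y1 y2 (p1 p2 : 'I_k) :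
  onth (enum I) p1 = Some x1 -> onth (enum I) p2 = Some x2 -> p1 != p2 ->
  y1 \notin I -> y2 \notin I -> y1 != y2 ->
  (hh L Rm (swap2 I x1 x2 y1 y2) != 0) = (minor2 M p1 p2 y1 y2 != 0).
Proof.
move=> ex1 ex2 p12 y1I y2I y12; have [e [e0 eM _]] := swap2_minors ex1 ex2 p12 y1I y2I y12.
by rewrite (hh_neq0 (card_swap2 hI ex1 ex2 p12 y1I y2I y12)) eM mulf_eq0 negb_or e0 andbT.
Qed.

Lemma minorR_swap1 x y (p : 'I_k) : onth (enum I) p = Some x -> y \notin I ->
  exists e : int, e%:~R != 0 :> K /\ minorR Rm (swap1 I x y) = minorR Rm I * (N p y * e%:~R).
Proof.
move=> ex yI; have [e [e0 _ eN]] := swap1_minors ex yI.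
by exists e; rewrite !minorR_tr (minor_reduce _ RtI_neq0) eN.
Qed.

Lemma chi_nonzero_reduced x1 x2 y1 y2 (p1 p2 : 'I_k) :
  onth (enum I) p1 = Some x1 -> onth (enum I) p2 = Some x2 -> p1 != p2 ->
  y1 \notin I -> y2 \notin I -> y1 != y2 ->
  chi_nonzero L Rm I x1 x2 y1 y2 <->
  [/\ minor2 M p1 p2 y1 y2 != 0, M p1 y1 * M p2 y2 != 0 & M p1 y2 * M p2 y1 != 0].
Proof.
move=> ex1 ex2 p12 y1I y2I y12.
have hhI : hh L Rm I != 0 by rewrite mulf_neq0 ?SA1.
rewrite /chi_nonzero !(mulf_eq0 (hh L Rm _)) !negb_or hhI (hh_swap2_neq0 ex1 ex2 p12 y1I y2I y12).
by rewrite !(hh_swap1_neq0 ex1) ?(hh_swap1_neq0 ex2) // -!negb_or -!mulf_eq0.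
Qed.

(* Y is the cross ratio of N up to a nonzero factor in F. *)
Lemma Yterm_inF i j a b (pi pj : 'I_k) :
  onth (enum I) pi = Some i -> onth (enum I) pj = Some j -> a \notin I -> b \notin I ->
  F (cross N pi pj a b) -> F (Yterm Rm I i j a b).
Proof.
move=> epi epj aI bI Fc; rewrite /Yterm.
have [e1 [e10 ->]] := minorR_swap1 epi aI; have [e2 [e20 ->]] := minorR_swap1 epj bI.
have [e3 [e30 ->]] := minorR_swap1 epi bI; have [e4 [e40 ->]] := minorR_swap1 epj aI.
set s := (Num.sg _)%:~R.
have -> : - s * (minorR Rm I * (N pi a * e1%:~R) * (minorR Rm I * (N pj b * e2%:~R))) /
      (minorR Rm I * (N pi b * e3%:~R) * (minorR Rm I * (N pj a * e4%:~R))) =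
    - s * (e1%:~R * e2%:~R / (e3%:~R * e4%:~R)) * cross N pi pj a b.
  by rewrite /cross; field; rewrite e30 e40 SA1 ?N_neq0.
apply: (inF_mul phi_inj) Fc; apply: (inF_mul phi_inj); first exact/inF_opp/inF_int.
by apply: (inF_mul phi_inj); [apply: (inF_mul phi_inj) | apply/inF_inv/(inF_mul phi_inj)];
  apply: inF_int.
Qed.

End Setting.

Theorem mainTheorem4
  (R : realType) (d : nat) (K : closedFieldType)
  (phi : {rmorphism {mpoly (Cplx R)[d]} -> K})
  (k n : nat) (L : 'M[K]_(k, n)) (Rm : 'M[K]_(n, k))
  (I : {set 'I_n}) (i j a b : 'I_n) :
  (0 < d)%N -> (1 <= k)%N -> (k <= n)%N ->
  (* phi is injective, and K is algebraic over phi(C[t]), so K is an algebraic closure of F *)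
  injective phi ->
  (forall x : K, exists p : {poly {mpoly (Cplx R)[d]}},
      p != 0 /\ root (map_poly phi p) x) ->
  (* (SA1) *)
  (forall J : {set 'I_n}, #|J| = k -> minorR Rm J != 0) ->
  (* (SA2) *)
  (forall J : {set 'I_n}, #|J| = k -> minorL L J != 0 -> isLunit phi (hh L Rm J)) ->
  (* (SA3) *)
  (forall c : 'I_n, exists r : 'I_k, L r c != 0) ->
  #|I| = k -> i \in I -> j \in I -> i != j ->
  a \notin I -> b \notin I -> a != b ->
  radical phi L Rm I i j a b ->
  forall g : 'I_n, g \notin I -> g != a -> chi_nonzero L Rm I i j a g.
Proof.
move=> _ _ _ inj _ SA1 SA2 SA3 hI iI jI ij aI bI ab [chi notY] g gI ga.
have [->|gb] := eqVneq g b; first exact: chi.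
have [pi epi] := onth_pos hI iI; have [pj epj] := onth_pos hI jI.
have pij : pi != pj by rewrite -(onth_enum_neq epi epj).
have LI : minorL L I != 0.
  by case: chi => hh0 _ _; apply: contraNneq hh0 => L0; rewrite /hh L0 !mul0r.
have red_chi := chi_nonzero_reduced SA1 hI LI epi epj pij aI.
move/(red_chi _ bI ab): chi => [Dab]; rewrite !mulf_eq0 !negb_or => /andP[mia mjb] /andP[mib mja].
have notF : ~ inF phi (cross (reduce I Rm^T) pi pj a b).
  by move=> /(Yterm_inF inj SA1 hI LI epi epj aI bI).
have [mig mjg Dag] := exchange_MN inj SA1 SA2 SA3 hI LI pij aI bI gI ab ga gb mia mib mja mjb notF.
apply/red_chi => //; first by rewrite eq_sym.
by split=> //; apply: mulf_neq0.
Qed.
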